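(* Assume only upper-bound group constraints (with $\mathcal S\ne\emptyset$) and let $F$ be a maxmin-fair distribution over $\mathcal S$ for satisfaction $A=V$. Then for every probability distribution $D$ over $\mathcal S$, $$\max_{u\in\mathcal U}F[u]-\min_{v\in\mathcal U}F[v]\ \le\ \max_{u\in\mathcal U}D[u]-\min_{v\in\mathcal U}D[v].$$
   Context: Ranking setting: $\mathcal U=\{u_1,\dots,u_n\}$ finite set of individuals partitioned into groups $C_1,\dots,C_t$; $R:\mathcal U\to\mathbb R$ relevance with distinct values; rankings are bijections $r:\mathcal U\to[n]$. Only upper bounds: $\mathcal S=\{r:\ |\{u\in C_k: r(u)\le i\}|\le u_i^k\ \forall i\in[n],k\in[t]\}$ for given integers $u_i^k$. Value function $V(r,u)=f(r(u))-g(u)$ with $f:[n]\to\mathbb R$ non-increasing and $g:\mathcal U\to\mathbb R$ satisfying $R(u)\ge R(v)\Rightarrow g(u)\ge g(v)$. For a distribution $D$ over $\mathcal S$, $D[u]=\mathbb E_{r\sim D}[V(r,u)]$. $F$ is maxmin-fair if for every distribution $D$ over $\mathcal S$ and every $u$: $D[u]>F[u]$ implies there is $v$ with $D[v]<F[v]\le F[u]$. *)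

From mathcomp Require Import all_boot all_order all_algebra.
From mathcomp Require Export reals.
Set Implicit Arguments. Unset Strict Implicit. Unset Printing Implicit Defensive.
Import Order.TTheory GRing.Theory Num.Theory.
Local Open Scope ring_scope.

(* Individuals: a finite type U with n := #|U| elements.
   A ranking is a bijection U -> [n]; we represent it by an injective
   finite function r : U -> 'I_#|U|, the rank of u being (r u).+1 in [n]. *)
Definition ranking (U : finType) := {ffun U -> 'I_#|U|}.

Definition is_ranking (U : finType) (r : ranking U) : bool := injectiveb r.

Definition rank (U : finType) (r : ranking U) (u : U) : nat := (nat_of_ord (r u)).+1.

(* Upper-bound group constraints: grp : U -> K assigns each individual its
   group C_k; ub i k is the upper bound u_i^k. *)
Definition in_S (U K : finType) (grp : U -> K) (ub : nat -> K -> nat)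
  (r : ranking U) : bool :=
  is_ranking r &&
  [forall k : K, [forall i : 'I_#|U|,
     (#|[set u | (grp u == k) && (rank r u <= i.+1)%N]| <= ub i.+1 k)%N]].

Definition V (R : realType) (U : finType) (f : nat -> R) (g : U -> R)
  (r : ranking U) (u : U) : R := f (rank r u) - g u.

Definition distr_on_S (R : realType) (U K : finType) (grp : U -> K)
  (ub : nat -> K -> nat) (D : {ffun ranking U -> R}) : Prop :=
  (forall r, 0 <= D r) /\ (\sum_r D r = 1) /\
  (forall r, D r != 0 -> in_S grp ub r).

Definition expV (R : realType) (U : finType) (f : nat -> R) (g : U -> R)
  (D : {ffun ranking U -> R}) (u : U) : R :=
  \sum_r D r * V f g r u.

Definition maxmin_fair (R : realType) (U K : finType) (grp : U -> K)
  (ub : nat -> K -> nat) (f : nat -> R) (g : U -> R)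
  (F : {ffun ranking U -> R}) : Prop :=
  distr_on_S grp ub F /\
  forall D, distr_on_S grp ub D ->
    forall u, expV f g D u > expV f g F u ->
      exists v, expV f g D v < expV f g F v /\ expV f g F v <= expV f g F u.

(* max and min over the nonempty finite type U (u0 witnesses nonemptiness;
   the value does not depend on u0). *)
Definition maxU (R : realType) (U : finType) (u0 : U) (x : U -> R) : R :=
  \big[Num.max/x u0]_(u : U) x u.
Definition minU (R : realType) (U : finType) (u0 : U) (x : U -> R) : R :=
  \big[Num.min/x u0]_(u : U) x u.

(* The theorem follows from two inequalities:
   - min D <= min F: if D made the worst-off individual under F better off,
     maxmin fairness would force someone even worse off under D (fair_minU);
   - max F <= max D: let W be the set of best-off individuals under F. Every
     ranking in the support of F minimises the total score sum_{u in W}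
     f(r(u)) over S (fair_support_optimal), so the average value of W under
     D is at least its value M under F, and some member of W gets at least M
     under D (fair_maxU).
   The heart of the second step is a combinatorial exchange lemma (exchange):
   if r, r' in S and W scores less under r' than under r, some ranking in S
   is at least as good as r for everybody outside W and strictly better for
   one of them. It is proved by making r and r' agree on longer and longer
   prefixes through transpositions that preserve the upper-bound constraints
   (swap_same, swap_to_front). Moving the mass of r onto that ranking would
   then contradict maxmin fairness. *)

From mathcomp Require Import all_boot all_order all_algebra perm.
From mathcomp Require Import ring.
Import Order.TTheory GRing.Theory Num.Theory.
Local Open Scope ring_scope.
Set Implicit Arguments. Unset Strict Implicit. Unset Printing Implicit Defensive.

Section Swaps.

Variables (U K : finType) (grp : U -> K) (ub : nat -> K -> nat).
Local Notation inS := (in_S grp ub).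

Definition swapr (r : ranking U) (a b : U) : ranking U := [ffun w => r (tperm a b w)].

Lemma swaprE (r : ranking U) a b w : swapr r a b w = r (tperm a b w).
Proof. by rewrite ffunE. Qed.

Lemma swapr_id (r : ranking U) a : swapr r a a = r.
Proof. by apply/ffunP => w; rewrite swaprE tperm1 perm1. Qed.

Lemma swapr_inj (r : ranking U) a b : injective r -> injective (swapr r a b).
Proof. by move=> ir x y; rewrite !swaprE => /ir /perm_inj. Qed.

Lemma in_SP (r : ranking U) :
  inS r <-> injective r /\
    forall k (i : 'I_#|U|), (#|[set w | (grp w == k) && (r w <= i)%N]| <= ub i.+1 k)%N.
Proof.
have prefixE k (i : 'I_#|U|) : [set w | (grp w == k) && (rank r w <= i.+1)%N]
    = [set w | (grp w == k) && (r w <= i)%N].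
  by apply/setP => w; rewrite !inE /rank ltnS.
rewrite /in_S /is_ranking; split.
  case/andP => /injectiveP ir /forallP H; split => // k i.
  by move/forallP: (H k) => /(_ i); rewrite prefixE.
case=> ir H; apply/andP; split; first exact/injectiveP.
by apply/forallP => k; apply/forallP => i; rewrite prefixE.
Qed.

Lemma in_S_inj (r : ranking U) : inS r -> injective r.
Proof. by case/in_SP. Qed.

Lemma grp_tperm (a b w : U) : grp a = grp b -> grp (tperm a b w) = grp w.
Proof. by move=> e; case: tpermP => // ->. Qed.

(* Exchanging two members of the same group keeps every prefix count. *)
Lemma swap_same (r : ranking U) a b : grp a = grp b -> inS r -> inS (swapr r a b).
Proof.
move=> e /in_SP [ir H]; apply/in_SP; split; first exact: swapr_inj.
move=> k i; apply: leq_trans (H k i).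
rewrite -(card_preimset _ (@perm_inj _ (tperm a b))); apply/eq_leq/eq_card => w.
by rewrite !inE swaprE grp_tperm // tpermK.
Qed.

Lemma pos_exists (r : ranking U) (i : 'I_#|U|) : injective r -> exists u, r u = i.
Proof.
move=> ir; have := inj_card_onto ir; rewrite card_ord => /(_ (leqnn _) i).
by case/codomP => u ->; exists u.
Qed.

Lemma group_min (r : ranking U) p b : (p <= r b)%N ->
  exists y, [/\ grp y = grp b, (p <= r y)%N &
                forall w, grp w = grp b -> (p <= r w)%N -> (r y <= r w)%N].
Proof.
move=> pb; have Pb : (grp b == grp b) && (p <= r b)%N by rewrite eqxx.
case: (@arg_minnP _ b (fun w => (grp w == grp b) && (p <= r w)%N)
         (fun w => nat_of_ord (r w)) Pb) => y /andP [/eqP gy py] ymin.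
by exists y; split => // w gw pw; apply: ymin; rewrite gw eqxx pw.
Qed.

Definition agree (p : nat) (r r' : ranking U) :=
  forall w, ((r w < p)%N || (r' w < p)%N) -> r w = r' w.

Lemma agree_sym p (r r' : ranking U) : agree p r r' -> agree p r' r.
Proof. by move=> H w hw; rewrite H // orbC. Qed.

Lemma agree_ge p (r r' : ranking U) w : agree p r r' -> (p <= r w)%N -> (p <= r' w)%N.
Proof.
move=> H hw; rewrite leqNgt; apply/negP => hlt.
by move: hw; rewrite H ?hlt ?orbT // leqNgt hlt.
Qed.

Lemma agree_swap p (r r' : ranking U) u v :
  agree p r r' -> (p <= r u)%N -> (p <= r v)%N -> agree p (swapr r u v) r'.
Proof.
move=> H hu hv w; rewrite swaprE.
case: tpermP => [->|->|/eqP wu /eqP wv]; last exact: H.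
- by rewrite ltnNge hv /= ltnNge (agree_ge H hu).
- by rewrite ltnNge hu /= ltnNge (agree_ge H hv).
Qed.

Lemma agree_succ p (r r' : ranking U) c : injective r -> injective r' -> agree p r r' ->
  r c = p :> nat -> r' c = p :> nat -> agree p.+1 r r'.
Proof.
move=> ir ir' ag rc rc' w.
have at_c (s : ranking U) : injective s -> s c = p :> nat -> s w = p :> nat -> w = c.
  by move=> injs sc sw; apply: injs; apply: val_inj; rewrite /= sc sw.
case: (boolP ((r w < p)%N || (r' w < p)%N)) => [h _|]; first exact: ag.
rewrite negb_or -!leqNgt !ltnS => /andP [h1 h2] /orP [] hw.
- have -> : w = c by apply: (at_c r) => //; apply/eqP; rewrite eqn_leq hw h1.
  by apply: val_inj; rewrite /= rc rc'.
- have -> : w = c by apply: (at_c r') => //; apply/eqP; rewrite eqn_leq hw h2.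
  by apply: val_inj; rewrite /= rc rc'.
Qed.

Lemma agree_full (r r' : ranking U) : agree #|U| r r' -> r = r'.
Proof. by move=> ag; apply/ffunP => w; apply: ag; rewrite ltn_ord. Qed.

(* Moving y up to the position p of a is feasible when y is the first member
   of its group at or after position p and r' places a member b of that same
   group at position p: in the prefixes that grow, y merely takes the place
   b has in r'; every other prefix only loses members. *)
Lemma swap_to_front (r r' : ranking U) p a b y :
  inS r -> inS r' -> agree p r r' -> r a = p :> nat -> r' b = p :> nat ->
  grp y = grp b -> (p <= r y)%N ->
  (forall w, grp w = grp b -> (p <= r w)%N -> (r y <= r w)%N) ->
  inS (swapr r a y).
Proof.
move=> hS hS' ag ra rb gy py ymin.
case: (eqVneq a y) => [<-|nay]; first by rewrite swapr_id.
move/in_SP: hS => [ir H]; move/in_SP: hS' => [ir' H'].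
apply/in_SP; split; first exact: swapr_inj.
move=> k i.
case: (boolP [&& grp y == k, (p <= i)%N & (i < r y)%N]) => [/and3P[/eqP gk pi iq] | hc].
  set A := [set w | (grp w == k) && (r w < p)%N].
  have sub_new : [set w | (grp w == k) && (swapr r a y w <= i)%N] \subset y |: A.
    apply/subsetP => w; rewrite !inE swaprE => /andP [/eqP gw].
    case: tpermP => [->|->|/eqP wa /eqP wy] hw; first by move: hw; rewrite leqNgt iq.
      by rewrite eqxx.
    rewrite (negPf wy) gw eqxx /= ltnNge; apply/negP => pw.
    have := ymin w; rewrite gw -gk gy => /(_ erefl pw).
    by rewrite leqNgt (leq_ltn_trans hw iq).
  have sub_old : b |: A \subset [set w | (grp w == k) && (r' w <= i)%N].
    apply/subsetP => w; rewrite !inE => /orP [/eqP ->|/andP [gw hw]].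
      by rewrite -gy gk eqxx rb pi.
    by rewrite gw /= -(ag w) ?hw // (leq_trans (ltnW hw) pi).
  have bA : b \notin A.
    rewrite inE; apply/negP => /andP [_ hb].
    by move: (hb); rewrite (ag b) ?hb // rb ltnn.
  apply: leq_trans (subset_leq_card sub_new) _.
  apply: leq_trans (H' k i); apply: leq_trans (subset_leq_card sub_old).
  by rewrite !cardsU1 bA leq_add2r leq_b1.
apply: leq_trans (H k i) ; apply: subset_leq_card.
apply/subsetP => w; rewrite !inE swaprE => /andP [/eqP gw].
rewrite gw eqxx /=; case: tpermP => [wa|wy|//] hw.
- by rewrite wa ra; apply: leq_trans py hw.
- by move: hc; rewrite -wy gw eqxx -ra hw /= -leqNgt.
Qed.

End Swaps.

Lemma sum_diff2 (R : comNzRingType) (U : finType) (u v : U) (F G : U -> R) :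
  u != v -> (forall w, w != u -> w != v -> F w = G w) ->
  \sum_w F w = \sum_w G w + (F u - G u) + (F v - G v).
Proof.
move=> nuv H.
rewrite (bigD1 u) //= (bigD1 v) /=; last by rewrite eq_sym.
rewrite [in RHS](bigD1 u) //= [in RHS](bigD1 v) /=; last by rewrite eq_sym.
rewrite (eq_bigr G); last by move=> w /andP [] ? ?; apply: H.
set s := \sum_(i | _) G i.
ring.
Qed.

Section Scores.

Variables (R : realType) (U : finType) (f : nat -> R) (W : pred U).
Hypothesis f_noninc :
  forall i j : nat, (1 <= i)%N -> (i <= j)%N -> (j <= #|U|)%N -> f j <= f i.

Definition score (r : ranking U) (u : U) : R := f (rank r u).

Definition scoreW (r : ranking U) : R := \sum_w (if W w then score r w else 0).

Definition improves (r1 r : ranking U) : Prop :=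
  forall u, ~~ W u -> score r u <= score r1 u.

Definition strictly_improves (r1 r : ranking U) : Prop :=
  improves r1 r /\ exists u, ~~ W u /\ score r u < score r1 u.

Lemma strictly_improves_trans (r r1 r2 : ranking U) :
  improves r1 r -> strictly_improves r2 r1 -> strictly_improves r2 r.
Proof.
move=> imp1 [imp2 [u [Wu lt]]]; split.
  by move=> w Ww; apply: le_trans (imp1 w Ww) (imp2 w Ww).
by exists u; split => //; apply: le_lt_trans (imp1 u Wu) lt.
Qed.

Lemma score_swap (r : ranking U) a b w : score (swapr r a b) w = score r (tperm a b w).
Proof. by rewrite /score /rank swaprE. Qed.

Lemma score_mono (r : ranking U) u v : (r u <= r v)%N -> score r v <= score r u.
Proof. by move=> h; rewrite /score /rank; apply: f_noninc => //; rewrite ltnS ?ltn_ord. Qed.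

Lemma scoreW_swap (r : ranking U) u v :
  scoreW (swapr r u v) = scoreW r + ((W v)%:R - (W u)%:R) * (score r u - score r v).
Proof.
case: (eqVneq u v) => [->|nuv]; first by rewrite swapr_id subrr mul0r addr0.
rewrite /scoreW (sum_diff2 (G := fun w => if W w then score r w else 0) nuv); last first.
  by move=> w wu wv; rewrite score_swap tpermD // eq_sym.
rewrite !score_swap tpermL tpermR.
by case: (W u); case: (W v) => /=; ring.
Qed.

Lemma scoreW_demote (r : ranking U) u v :
  ~~ W v -> (r u <= r v)%N -> scoreW (swapr r u v) <= scoreW r.
Proof.
move=> Wv ruv; rewrite scoreW_swap (negPf Wv) gerDl sub0r mulNr oppr_le0.
by case: (W u); rewrite ?mul0r // mul1r subr_ge0 score_mono.
Qed.

Lemma promote (r : ranking U) c d : W c -> (r c <= r d)%N ->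
  strictly_improves (swapr r c d) r \/
  improves (swapr r c d) r /\ scoreW (swapr r c d) = scoreW r.
Proof.
move=> Wc rcd.
have imp : improves (swapr r c d) r.
  move=> u Wu; rewrite score_swap.
  case: tpermP => [uc|ud|//]; first by rewrite uc Wc in Wu.
  by rewrite ud score_mono.
case: (boolP (~~ W d && (score r d < score r c))) => [/andP [Wd lt]|hns].
  by left; split => //; exists d; rewrite score_swap tpermR.
right; split => //; rewrite scoreW_swap Wc.
case: (boolP (W d)) => Wd; first by rewrite subrr mul0r addr0.
move: hns; rewrite Wd /= => hns.
have : score r d <= score r c by apply: score_mono.
by rewrite le_eqVlt (negPf hns) orbF => /eqP ->; rewrite subrr mulr0 addr0.
Qed.

End Scores.

Section Exchange.

Variables (R : realType) (U K : finType) (grp : U -> K) (ub : nat -> K -> nat).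
Variables (f : nat -> R) (W : pred U).
Hypothesis f_noninc :
  forall i j : nat, (1 <= i)%N -> (i <= j)%N -> (j <= #|U|)%N -> f j <= f i.
Local Notation inS := (in_S grp ub).
Local Notation scoreW := (scoreW f W).

Definition improvable (r : ranking U) : Prop :=
  exists r1, inS r1 /\ strictly_improves f W r1 r.

Lemma improvable_of_improves (r r1 : ranking U) :
  improves f W r1 r -> improvable r1 -> improvable r.
Proof.
by move=> imp [r2 [hS2 sd]]; exists r2; split => //; apply: strictly_improves_trans sd.
Qed.

Section Step.

(* One step of the exchange argument: two feasible rankings agreeing before
   position p are transformed, without losing feasibility, without hurting
   anybody outside W and without closing the gap in the total score of W,
   into two rankings agreeing before position p + 1. *)
Variable p : nat.
Hypothesis IH : forall s s', inS s -> inS s' -> agree p.+1 s s' ->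
  scoreW s' < scoreW s -> improvable s.

(* If r places a member of W at position p, the first member y (after p) of
   the group of r'(p) is moved up to p in r, and then either r' or r is
   adjusted so that both place the same individual at p. *)
Lemma step_in_W (r r' : ranking U) a b : inS r -> inS r' -> agree p r r' ->
  r a = p :> nat -> r' b = p :> nat -> W a -> scoreW r' < scoreW r -> improvable r.
Proof.
move=> hS hS' ag ra rb Wa lt.
have [y [gy py ymin]] := group_min grp (agree_ge (agree_sym ag) (eq_leq (esym rb))).
set r1 := swapr r a y.
have hS1 : inS r1 by apply: (swap_to_front hS hS' ag ra rb gy py ymin).
have r1y : r1 y = p :> nat by rewrite swaprE tpermR ra.
have ag1 : agree p r1 r' by apply: agree_swap; rewrite ?ra.
have ray : (r a <= r y)%N by rewrite ra.
have [sd|[imp1 eq1]] := promote f_noninc Wa ray; first by exists r1.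
apply: (improvable_of_improves imp1).
have p1b : (p <= r1 b)%N by rewrite (agree_ge (agree_sym ag1)) ?rb.
case: (boolP (W y)) => Wy.
- set r2 := swapr r1 y b.
  have hS2 : inS r2 by apply: swap_same.
  have ag2 : agree p r2 r' by apply: agree_swap; rewrite ?r1y.
  have r2b : r2 b = p :> nat by rewrite swaprE tpermR r1y.
  have r1yb : (r1 y <= r1 b)%N by rewrite r1y.
  have [sd|[imp2 eq2]] := promote f_noninc Wy r1yb; first by exists r2.
  apply: (improvable_of_improves imp2); apply: (IH hS2 hS'); last by rewrite eq2 eq1.
  exact: agree_succ (in_S_inj hS2) (in_S_inj hS') ag2 r2b rb.
- set r1' := swapr r' b y.
  have hS1' : inS r1' by apply: swap_same.
  have py' : (p <= r' y)%N by apply: (agree_ge ag1); rewrite r1y.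
  have ag2 : agree p r1 r1'.
    by apply/agree_sym/agree_swap; rewrite ?rb //; apply: agree_sym.
  have r1'y : r1' y = p :> nat by rewrite swaprE tpermR rb.
  apply: (IH hS1 hS1'); first exact: agree_succ (in_S_inj hS1) (in_S_inj hS1') ag2 r1y r1'y.
  by rewrite eq1; apply: le_lt_trans lt; apply: scoreW_demote; rewrite ?rb.
Qed.

(* If r places an individual a outside W at position p, then r' is adjusted:
   a first trades places with the first member x of its group after p, and
   then moves up to position p. *)
Lemma step_notin_W (r r' : ranking U) a : inS r -> inS r' -> agree p r r' ->
  r a = p :> nat -> ~~ W a -> scoreW r' < scoreW r -> improvable r.
Proof.
move=> hS hS' ag ra Wa lt.
have pa : (p <= r' a)%N by rewrite (agree_ge ag) ?ra.
have [x [gx px xmin]] := group_min grp pa.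
set s := swapr r' x a.
have hSs : inS s by apply: swap_same.
have ags : agree p s r by apply: agree_swap => //; apply: agree_sym.
have sa : s a = r' x by rewrite swaprE tpermR.
have pn : (p < #|U|)%N by rewrite -ra ltn_ord.
have [b sb] := pos_exists (Ordinal pn) (in_S_inj hSs).
have sb' : s b = p :> nat by rewrite sb.
set s2 := swapr s b a.
have hS2 : inS s2.
  apply: (swap_to_front hSs hS ags sb' ra erefl); rewrite ?sa // => w gw.
  by rewrite swaprE => pw; apply: xmin => //; rewrite grp_tperm.
have ag2 : agree p s2 r by apply: agree_swap; rewrite ?sb' ?sa.
have s2a : s2 a = p :> nat by rewrite swaprE tpermR.
apply: (IH hS hS2); first exact: agree_succ (in_S_inj hS) (in_S_inj hS2) (agree_sym ag2) ra s2a.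
apply: le_lt_trans lt; apply: le_trans (scoreW_demote f_noninc _ _) _ => //.
  by rewrite sb' sa.
by apply: scoreW_demote => //; apply: xmin.
Qed.

End Step.

Lemma improvable_of_agree k : forall p, (p + k)%N = #|U| -> forall r r',
  inS r -> inS r' -> agree p r r' -> scoreW r' < scoreW r -> improvable r.
Proof.
elim: k => [|k IHk] p hp r r' hS hS' ag lt.
  by move: lt; rewrite (agree_full (_ : agree #|U| r r')) ?ltxx // -hp addn0.
have pn : (p < #|U|)%N by rewrite -hp -addSnnS leq_addr.
have IHp := IHk p.+1 (etrans (addSnnS p k) hp).
have [a ra] := pos_exists (Ordinal pn) (in_S_inj hS).
case: (boolP (W a)) => Wa; last by apply: (@step_notin_W p IHp r r' a hS hS' ag _ Wa lt); rewrite ra.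
have [b rb] := pos_exists (Ordinal pn) (in_S_inj hS').
by apply: (@step_in_W p IHp r r' a b hS hS' ag _ _ Wa lt); rewrite ?ra ?rb.
Qed.

Lemma exchange (r r' : ranking U) :
  inS r -> inS r' -> scoreW r' < scoreW r -> improvable r.
Proof.
move=> hS hS'; apply: (@improvable_of_agree #|U| 0 (add0n _) _ _ hS hS') => w.
by rewrite !ltn0.
Qed.

End Exchange.

Section Extrema.

Variables (R : realType) (U : finType) (u0 : U).

Lemma maxU_ge (x : U -> R) u : x u <= maxU u0 x.
Proof. exact: le_bigmax. Qed.

Lemma minU_le (x : U -> R) u : minU u0 x <= x u.
Proof. exact: bigmin_le. Qed.

Lemma maxU_attained (x : U -> R) : exists u, maxU u0 x = x u.
Proof.
rewrite /maxU; apply: (big_ind (fun z => exists u, z = x u)); first by exists u0.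
  by move=> _ _ [a ->] [b ->]; case: (leP (x a) (x b)) => _; [exists b | exists a].
by move=> u _; exists u.
Qed.

Lemma minU_attained (x : U -> R) : exists u, minU u0 x = x u.
Proof.
rewrite /minU; apply: (big_ind (fun z => exists u, z = x u)); first by exists u0.
  by move=> _ _ [a ->] [b ->]; case: (leP (x a) (x b)) => _; [exists a | exists b].
by move=> u _; exists u.
Qed.

Definition argmaxU (x : U -> R) : pred U := [pred u | x u == maxU u0 x].

End Extrema.

Lemma avg_le (R : realDomainType) (T : finType) (w a : T -> R) c :
  (forall t, 0 <= w t) -> \sum_t w t = 1 -> (forall t, w t != 0 -> a t <= c) ->
  \sum_t w t * a t <= c.
Proof.
move=> w0 w1 ha; rewrite -[leRHS]mul1r -w1 mulr_suml; apply: ler_sum => t _.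
by case: (eqVneq (w t) 0) => [->|wt]; rewrite ?mul0r // ler_wpM2l ?ha.
Qed.

Lemma avg_ge (R : realDomainType) (T : finType) (w a : T -> R) c :
  (forall t, 0 <= w t) -> \sum_t w t = 1 -> (forall t, w t != 0 -> c <= a t) ->
  c <= \sum_t w t * a t.
Proof.
move=> w0 w1 ha; rewrite -[leLHS]mul1r -w1 mulr_suml; apply: ler_sum => t _.
by case: (eqVneq (w t) 0) => [->|wt]; rewrite ?mul0r // ler_wpM2l ?ha.
Qed.

Section Fairness.

Variables (R : realType) (U K : finType) (u0 : U) (grp : U -> K) (ub : nat -> K -> nat).
Variables (f : nat -> R) (g : U -> R).
Local Notation inS := (in_S grp ub).
Local Notation distr := (distr_on_S grp ub).
Local Notation E := (expV f g).

Definition shift_mass (F : {ffun ranking U -> R}) (r r2 : ranking U) :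
  {ffun ranking U -> R} :=
  [ffun s => F s + (if s == r2 then F r else 0) - (if s == r then F r else 0)].

Lemma shift_mass_distr (F : {ffun ranking U -> R}) r r2 : distr F -> inS r2 -> distr (shift_mass F r r2).
Proof.
move=> [F0 [F1 FS]] hS2; split; [|split].
- move=> s; rewrite ffunE; case: (eqVneq s r) => [->|_]; last first.
    by rewrite subr0 addr_ge0 //; case: ifP.
  by rewrite addrAC subrr add0r; case: ifP.
- rewrite (eq_bigr (fun s => F s + (if s == r2 then F r else 0)
                             - (if s == r then F r else 0))); last by move=> s _; rewrite ffunE.
  by rewrite sumrB big_split /= -!big_mkcond /= !big_pred1_eq F1 addrK.
- move=> s; rewrite ffunE; case: (eqVneq s r2) => [->|_] //.
  case: (eqVneq s r) => [->|_]; first by rewrite addr0 subrr eqxx.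
  by rewrite addr0 subr0; apply: FS.
Qed.

Lemma expV_shift_mass (F : {ffun ranking U -> R}) r r2 u :
  E (shift_mass F r r2) u = E F u + F r * (score f r2 u - score f r u).
Proof.
rewrite /expV (eq_bigr (fun s => F s * V f g s u + (if s == r2 then F r * V f g r2 u else 0)
                                 - (if s == r then F r * V f g r u else 0))); last first.
  by move=> s _; rewrite ffunE; do 2 case: eqP => [->|_]; ring.
rewrite sumrB big_split /= -!big_mkcond /= !big_pred1_eq /V /score; ring.
Qed.

Lemma sum_expV (Q : pred U) (D : {ffun ranking U -> R}) : \sum_r D r = 1 ->
  \sum_(u | Q u) E D u = \sum_r D r * scoreW f Q r - \sum_(u | Q u) g u.
Proof.
move=> D1; rewrite /expV exchange_big /=.
rewrite (eq_bigr (fun r => D r * scoreW f Q r - D r * \sum_(u | Q u) g u)); last first.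
  move=> r _; rewrite -mulrBr -mulr_sumr; congr (_ * _).
  by rewrite /scoreW -big_mkcond /= -sumrB.
by rewrite sumrB -mulr_suml D1 mul1r.
Qed.

Variable F : {ffun ranking U -> R}.
Hypothesis F_fair : maxmin_fair grp ub f g F.

(* The worst-off individual under F is no better off under F than under any
   distribution D: otherwise maxmin fairness would be violated at it. *)
Lemma fair_minU (D : {ffun ranking U -> R}) : distr D -> minU u0 (E D) <= minU u0 (E F).
Proof.
move=> hD; have [us ->] := minU_attained u0 (E F).
case: (leP (E D us) (E F us)) => h; first exact: le_trans (minU_le u0 _ us) h.
have [v [hv1 hv2]] := F_fair.2 D hD us h.
exact: le_trans (minU_le u0 _ v) (ltW (lt_le_trans hv1 hv2)).
Qed.

Hypothesis f_noninc :
  forall i j : nat, (1 <= i)%N -> (i <= j)%N -> (j <= #|U|)%N -> f j <= f i.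

(* Otherwise the exchange
   lemma yields a feasible ranking strictly better for someone outside W and
   no worse for anybody outside W; moving the mass of r onto it would then
   contradict maxmin fairness. *)
Lemma fair_support_optimal (r r' : ranking U) : F r != 0 -> inS r' ->
  scoreW f (argmaxU u0 (E F)) r <= scoreW f (argmaxU u0 (E F)) r'.
Proof.
set W := argmaxU u0 (E F) => Fr hS'; rewrite leNgt; apply/negP => hlt.
have [hF fair] := F_fair.
have [r2 [hS2 [imp [x [Wx ltx]]]]] := exchange f_noninc (hF.2.2 r Fr) hS' hlt.
have Fr_pos : 0 < F r by rewrite lt_def Fr hF.1.
set G := shift_mass F r r2.
have EG u : E G u = E F u + F r * (score f r2 u - score f r u) by apply: expV_shift_mass.
have [v [hv1 hv2]] : exists v, E G v < E F v /\ E F v <= E F x.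
  by apply: fair; [apply: shift_mass_distr | rewrite EG ltrDl mulr_gt0 // subr_gt0].
have Wv : W v.
  apply/negPn/negP => Wv; move: hv1; rewrite EG gtrDl pmulr_rlt0 // subr_lt0.
  by rewrite ltNge imp.
have : E F x < maxU u0 (E F) by rewrite lt_neqAle Wx maxU_ge.
by rewrite -(eqP Wv) ltNge hv2.
Qed.

(* The best-off individuals under F are, on average, at least as well off
   under any distribution D; hence so is the best-off individual under D. *)
Lemma fair_maxU (D : {ffun ranking U -> R}) : distr D -> maxU u0 (E F) <= maxU u0 (E D).
Proof.
move=> [D0 [D1 DS]]; have [[F0 [F1 FS]] _] := F_fair.
set W := argmaxU u0 (E F).
have [r0 Fr0] : exists r0, F r0 != 0.
  apply/existsP; rewrite -negb_forall; apply/negP => /forallP F_0.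
  by move: F1; rewrite big1 => [/eqP|r _]; [rewrite eq_sym oner_eq0 | apply/eqP].
have [uM huM] := maxU_attained u0 (E F).
have cardW : (0 < #|[pred u | W u]|)%N by apply/card_gt0P; exists uM; rewrite !inE /W /argmaxU inE -huM.
rewrite -(ler_pMn2r cardW) -!sumr_const.
apply: le_trans (_ : \sum_(u | W u) E D u <= _); last by apply: ler_sum => u _; apply: maxU_ge.
rewrite (eq_bigr (E F)); last by move=> u /eqP.
rewrite !sum_expV // lerD2r.
apply: le_trans (avg_ge D0 D1 (c := scoreW f W r0) _).
  by apply: avg_le => // r Fr; apply: fair_support_optimal => //; apply: FS.
by move=> r Dr; apply: fair_support_optimal => //; apply: DS.
Qed.

End Fairness.

Unset Implicit Arguments.
Set Strict Implicit.

Theorem mainTheorem3 (R : realType) (U K : finType) (u0 : U)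
  (grp : U -> K) (ub : nat -> K -> nat)
  (Rel : U -> R) (f : nat -> R) (g : U -> R)
  (Rel_inj : injective Rel)
  (f_noninc : forall i j : nat, (1 <= i)%N -> (i <= j)%N -> (j <= #|U|)%N -> f j <= f i)
  (g_mono : forall u v : U, Rel v <= Rel u -> g v <= g u)
  (S_nonempty : exists r : ranking U, in_S grp ub r)
  (F : {ffun ranking U -> R})
  (F_fair : maxmin_fair grp ub f g F) :
  forall D : {ffun ranking U -> R}, distr_on_S grp ub D ->
    maxU u0 (expV f g F) - minU u0 (expV f g F)
      <= maxU u0 (expV f g D) - minU u0 (expV f g D).
Proof.
move=> D hD.
exact: lerB (fair_maxU u0 F_fair f_noninc hD) (fair_minU u0 F_fair hD).
Qed.
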